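(* Assume the characteristic of $K$ is good for $R$, and assume either that all branches of $R$ are singular, or that the branches of $R$ have pairwise different tangent directions. Let $A\in\mathcal A_K$ and let $(\varphi_A,\overline\sigma,\sigma)$ and $(\varphi_A,\overline\sigma',\sigma')$ be two equimultiple deformations with sections of the parametrization over $A$ with the same underlying morphism $\varphi_A:P_A\to\overline R_A$. Then $\sigma=\sigma'$ and $\overline\sigma=\overline\sigma'$; that is, the forgetful functor from equimultiple deformations with sections of the parametrization to deformations of the parametrization without sections is injective on objects.
   Context: $K$ is an algebraically closed field of characteristic $p\ge0$; $\mathcal A_K$ is the category of Noetherian complete local $K$-algebras with residue field $K$. $P=K[[x,y]]$, $f\in P$ reduced non-unit with irreducible factorization $f=f_1\cdots f_r$, $R=P/\langle f\rangle$ with branches $R_i=P/\langle f_i\rangle$. The normalization is $\overline R=\bigoplus_{i=1}^rK[[t_i]]$, with parametrization $\varphi=(\varphi_i):P\to\overline R$, $\varphi_i(x)=x_i(t_i)$, $\varphi_i(y)=y_i(t_i)$; $m_i=\ord\varphi_i=\min\{\ord_{t_i}x_i,\ord_{t_i}y_i\}$ is the multiplicity of the branch $R_i$. The characteristic is good for $R$ if $p=0$ or $p\nmid m_i$ for all $i$. A deformation with sections of the parametrization over $A\in\mathcal A_K$ consists of $A$-flat complete local algebras $P_A$, $\overline R_A=\bigoplus_i\overline R_{A,i}$, an $A$-algebra map $\varphi_A:P_A\to\overline R_A$ reducing to $\varphi$ modulo $\mathfrak m_A$ (Cartesian squares), and sections $\sigma:P_A\to A$, $\overline\sigma_i:\overline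 R_{A,i}\to A$ of the structure maps. It is equimultiple if $\varphi_{A,i}(\ker\sigma)\subset(\ker\overline\sigma_i)^{m_i}$ for all $i$. *)

From HB Require Import structures.
From mathcomp Require Import all_boot all_order all_algebra.
Set Implicit Arguments. Unset Strict Implicit. Unset Printing Implicit Defensive.
Import Order.TTheory GRing.Theory.
Local Open Scope ring_scope.

Section PS.
Variable R : nzRingType.
Definition ps1 : nat -> R := fun n => if n == 0%N then 1 else 0.
Definition psmul (F G : nat -> R) : nat -> R :=
  fun n => \sum_(j < n.+1) F j * G (n - j)%N.
Fixpoint pspow (F : nat -> R) (k : nat) : nat -> R :=
  match k with 0%N => ps1 | k'.+1 => psmul F (pspow F k') end.
Definition pssubC (F : nat -> R) (a : R) : nat -> R :=
  fun n => F n - (if n == 0%N then a else 0).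
End PS.

(* ---------- Bivariate formal power series  K[[x,y]] :  g i j = coeff of x^i y^j *)
Section BPS.
Variable K : fieldType.
Definition bps := nat -> nat -> K.
Definition bmul (f g : bps) : bps :=
  fun i j => \sum_(a < i.+1) \sum_(b < j.+1) f a b * g (i - a)%N (j - b)%N.
Definition bone : bps := fun i j => if (i == 0%N) && (j == 0%N) then 1 else 0.
Definition bprod (fs : seq bps) : bps := foldr bmul bone fs.
Definition beq (f g : bps) := forall i j, f i j = g i j.
Definition bunit (f : bps) := f 0%N 0%N != 0.
Definition bdvd (f g : bps) := exists h, beq g (bmul f h).
Definition birreducible (f : bps) :=
  f 0%N 0%N = 0 /\ (exists i j, f i j != 0) /\
  forall u v, beq f (bmul u v) -> bunit u \/ bunit v.
(* reduced = squarefree (K[[x,y]] is a UFD); also excludes f = 0 *)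
Definition breduced (f : bps) :=
  forall g, g 0%N 0%N = 0 -> ~ bdvd (bmul g g) f.
(* substitution  g(x(t), y(t))  for x(0) = y(0) = 0 (finite sums coefficientwise) *)
Definition bsubst (g : bps) (x y : nat -> K) : nat -> K :=
  fun n => \sum_(i < n.+1) \sum_(j < n.+1)
             g i j * psmul (pspow x i) (pspow y j) n.
End BPS.

Section Curve.
Variables (K : fieldType) (r : nat).

(* f is a reduced non-unit with irreducible factorization f = f_1 ... f_r,
   and phi_i : x |-> x_i(t), y |-> y_i(t) is the normalization of R_i = P/<f_i>:
   phi_i is local, ker phi_i = <f_i>, and K[[t]] lies in the fraction field of
   the image (K[[t]] being automatically integral over the image). *)
Definition param_of_curve (f : bps K) (fi : 'I_r -> bps K)
  (x y : 'I_r -> nat -> K) :=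
  [/\ f 0%N 0%N = 0, breduced f,
      (forall i, birreducible (fi i)),
      beq f (bprod [seq fi i | i <- enum 'I_r]) &
      forall i,
      [/\ x i 0%N = 0, y i 0%N = 0,
          (forall g, (forall n, bsubst g (x i) (y i) n = 0) <-> bdvd (fi i) g) &
          forall h : nat -> K, exists g1 g2 : bps K,
            (exists n, bsubst g2 (x i) (y i) n != 0) /\
            forall n, psmul (bsubst g2 (x i) (y i)) h n = bsubst g1 (x i) (y i) n]].

(* e = ord phi_i = min(ord x_i, ord y_i), the multiplicity of the branch *)
Definition is_mult (x y : nat -> K) (e : nat) :=
  (forall n, (n < e)%N -> x n = 0 /\ y n = 0) /\ (x e != 0 \/ y e != 0).

Definition good_char (mlt : 'I_r -> nat) :=
  forall i p, p \in [pchar K] -> ~~ (p %| mlt i)%N.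

(* tangent direction of branch i is [x_i(m_i) : y_i(m_i)] in P^1 *)
Definition distinct_tangents (x y : 'I_r -> nat -> K) (mlt : 'I_r -> nat) :=
  forall i j, i != j ->
    x i (mlt i) * y j (mlt j) - y i (mlt i) * x j (mlt j) != 0.
End Curve.

Section LocalAlg.
Variables (K : fieldType) (A : comAlgType K).

Definition is_ideal (I : A -> Prop) :=
  [/\ I 0, (forall a b, I a -> I b -> I (a + b)) & (forall s a, I a -> I (s * a))].

Fixpoint ideal_pow (I : A -> Prop) (n : nat) : A -> Prop :=
  match n with
  | 0%N => fun _ => True
  | n'.+1 => fun a => exists s : seq (A * A),
      (forall p, p \in s -> I p.1 /\ ideal_pow I n' p.2) /\
      a = \sum_(p <- s) p.1 * p.2
  end.

Definition generated_by (s : seq A) (a : A) :=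
  exists c : seq A, size c = size s /\ a = \sum_(k < size s) c`_k * s`_k.

(* A is local with maximal ideal mA, residue field K (via k |-> k%:A),
   Noetherian, and mA-adically complete (and separated). *)
Definition complete_local_K_alg (mA : A -> Prop) :=
  [/\ is_ideal mA, ~ mA 1,
      (forall a, ~ mA a -> exists b, a * b = 1),
      (forall a, exists k : K, mA (a - k%:A)) &
      (forall I, is_ideal I -> exists s, forall a, I a <-> generated_by s a)] /\
  (forall a, (forall n, ideal_pow mA n a) -> a = 0) /\
      (forall u : nat -> A,
         (forall n, exists N, forall k, (N <= k)%N -> ideal_pow mA n (u k - u N)) ->
         exists l, forall n, exists N, forall k, (N <= k)%N ->
           ideal_pow mA n (u k - l)).

Definition in_tpow (c : A) (e : nat) (F : nat -> A) :=
  exists G : nat -> A, forall n,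
    F n = \sum_(j < n.+1) (('X - c%:P) ^+ e)`_j * G (n - j)%N.
End LocalAlg.

(* ---------- deformations of the parametrization over A (trivialized model:
   P_A = A[[x,y]], Rbar_{A,i} = A[[t_i]]; phi_A given by x |-> X_i, y |-> Y_i) *)
Section Deformation.
Variables (K : fieldType) (A : comAlgType K) (mA : A -> Prop) (r : nat).

Definition lifts (x y : 'I_r -> nat -> K) (X Y : 'I_r -> nat -> A) :=
  forall i n, mA (X i n - (x i n)%:A) /\ mA (Y i n - (y i n)%:A).

(* sections: sigma : x |-> a, y |-> b ; sigmabar_i : t_i |-> c_i  (all in m_A);
   equimultiple: phi_{A,i}(ker sigma) = phi_{A,i}<x-a, y-b> in <t_i - c_i>^{m_i} *)
Definition equimult_sections (mlt : 'I_r -> nat) (X Y : 'I_r -> nat -> A)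
  (a b : A) (c : 'I_r -> A) :=
  [/\ mA a, mA b, (forall i, mA (c i)) &
      forall i, in_tpow (c i) (mlt i) (pssubC (X i) a) /\
                in_tpow (c i) (mlt i) (pssubC (Y i) b)].
End Deformation.

(* Put d = c' - c and compare the two factorizations X_i - a = (t - c_i)^m G and
   X_i - a' = (t - c'_i)^m G' modulo successive powers of m_A.  If a' - a, b' - b,
   d_i and G - G' lie in m_A^n then, since (t - c)^m = t^m mod m_A and
   (t - c)^m - (t - c')^m = m d t^(m-1) mod m_A^(n+1), coefficient k of the
   difference of the factorizations reads
     [k = 0] (a' - a) = [m <= k] (G - G')_(k-m) + [m-1 <= k] m d x_i(k+1)
   modulo m_A^(n+1).  There, at k = 0 a singular branch gives a' - a = 0; if all
   branches are smooth then (a' - a, b' - b) = d_i (x_i(1), y_i(1)) for every i, and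
   two transversal tangents force (a' - a, b' - b) = 0.  At k = m - 1 we then get
   m d_i (x_i(m), y_i(m)) = 0, hence d_i = 0 because m <> 0 in K, and the
   coefficients k >= m give G = G'.  As A is m_A-adically separated, the two
   sections coincide. *)

From HB Require Import structures.
From mathcomp Require Import all_boot all_order all_algebra ring.
Set Implicit Arguments. Unset Strict Implicit. Unset Printing Implicit Defensive.
Import GRing.Theory.
Local Open Scope ring_scope.

Section Ideal.
Variables (K : fieldType) (A : comAlgType K) (I : A -> Prop).
Hypothesis I_ideal : is_ideal I.

Lemma ideal0 : I 0. Proof. by case: I_ideal. Qed.

Lemma ideal_add u v : I u -> I v -> I (u + v).
Proof. by case: I_ideal => _ + _; apply. Qed.

Lemma ideal_mull s u : I u -> I (s * u).
Proof. by case: I_ideal => _ _; apply. Qed.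

Lemma ideal_mulr s u : I u -> I (u * s).
Proof. by rewrite mulrC; apply: ideal_mull. Qed.

Lemma ideal_opp u : I u -> I (- u).
Proof. by rewrite -mulN1r; apply: ideal_mull. Qed.

Lemma ideal_sub u v : I u -> I v -> I (u - v).
Proof. by move=> Iu Iv; apply: ideal_add => //; apply: ideal_opp. Qed.

Lemma ideal_muln u n : I u -> I (u *+ n).
Proof. by rewrite -mulr_natr; apply: ideal_mulr. Qed.

Lemma ideal_sum (J : Type) (s : seq J) (P : pred J) (F : J -> A) :
  (forall j, P j -> I (F j)) -> I (\sum_(j <- s | P j) F j).
Proof. exact: (big_ind I ideal0 ideal_add). Qed.

Lemma ideal_scale_cancel (k : K) u : k != 0 -> I (k%:A * u) -> I u.
Proof.
by move=> k_neq0 /(ideal_mull k^-1%:A); rewrite mulrA -!in_algE -rmorphM mulVf // rmorph1 mul1r.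
Qed.

Lemma ideal_muln_scale_cancel u n (k : K) : n%:R * k != 0 -> I (u *+ n * k%:A) -> I u.
Proof.
move=> nk_neq0 Iu; apply: (ideal_scale_cancel nk_neq0); move: Iu.
by rewrite mulr_algl mulr_algr -scalerA scaler_nat scalerMnr.
Qed.

Lemma ideal_collinear u v w w' (x y x' y' : K) :
  x * y' - y * x' != 0 ->
  I (u - x%:A * w) -> I (v - y%:A * w) -> I (u - x'%:A * w') -> I (v - y'%:A * w') ->
  I u /\ I v.
Proof.
move=> det_neq0 Iu Iv Iu' Iv'.
have Iuv := ideal_sub (ideal_mull y%:A Iu) (ideal_mull x%:A Iv).
have Iuv' := ideal_sub (ideal_mull y'%:A Iu') (ideal_mull x'%:A Iv').
split; apply: (ideal_scale_cancel det_neq0); rewrite -!in_algE rmorphB !rmorphM /=.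
  by apply: (eq_ind _ I (ideal_sub (ideal_mull x%:A Iuv') (ideal_mull x'%:A Iuv))); ring.
by apply: (eq_ind _ I (ideal_sub (ideal_mull y%:A Iuv') (ideal_mull y'%:A Iuv))); ring.
Qed.

End Ideal.

Section IdealPow.
Variables (K : fieldType) (A : comAlgType K) (mA : A -> Prop).
Hypothesis mA_ideal : is_ideal mA.

Lemma ideal_pow_ideal n : is_ideal (ideal_pow mA n).
Proof.
case: n => [|n]; first by [].
split.
- by exists [::]; rewrite big_nil.
- move=> _ _ [s [Hs ->]] [t [Ht ->]]; exists (s ++ t); rewrite big_cat; split=> // p.
  by rewrite mem_cat => /orP[]; [apply: Hs | apply: Ht].
- move=> w _ [s [Hs ->]]; exists [seq (w * p.1, p.2) | p <- s].
  rewrite big_map mulr_sumr; split; last by apply: eq_bigr => p _; rewrite mulrA.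
  by move=> _ /mapP[p /Hs[Ip1 Ip2] ->]; split=> //; apply: (ideal_mull mA_ideal).
Qed.

Lemma ideal_pow_mul n u v : mA u -> ideal_pow mA n v -> ideal_pow mA n.+1 (u * v).
Proof.
by move=> Iu Iv; exists [:: (u, v)]; rewrite big_seq1; split=> // p; rewrite inE => /eqP ->.
Qed.

Lemma ideal_pow1 u : mA u -> ideal_pow mA 1 u.
Proof. by move=> Iu; rewrite -[u]mulr1; apply: ideal_pow_mul. Qed.

End IdealPow.

Section PolyCongr.
Variables (K : fieldType) (A : comAlgType K) (I : A -> Prop).
Hypothesis I_ideal : is_ideal I.

Definition poly_congr (p q : {poly A}) := forall j, I (p - q)`_j.

Lemma poly_congr_refl p : poly_congr p p.
Proof. by move=> j; rewrite subrr coef0; apply: (ideal0 I_ideal). Qed.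

Lemma poly_congrD p p' q q' :
  poly_congr p p' -> poly_congr q q' -> poly_congr (p + q) (p' + q').
Proof.
move=> Ip Iq j; rewrite (_ : _ - _ = (p - p') + (q - q')); last by ring.
by rewrite coefD; apply: (ideal_add I_ideal).
Qed.

Lemma ideal_coefMl (p q : {poly A}) j : (forall i, I p`_i) -> I (p * q)`_j.
Proof.
move=> Ip; rewrite coefM; apply: (ideal_sum I_ideal) => i _.
by apply: (ideal_mulr I_ideal); apply: Ip.
Qed.

Lemma poly_congrM p p' q q' :
  poly_congr p p' -> poly_congr q q' -> poly_congr (p * q) (p' * q').
Proof.
move=> Ip Iq j; rewrite (_ : _ - _ = (p - p') * q + (q - q') * p'); last by ring.
by rewrite coefD; apply: (ideal_add I_ideal); apply: ideal_coefMl.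
Qed.

Lemma poly_congrX p q n : poly_congr p q -> poly_congr (p ^+ n) (q ^+ n).
Proof.
move=> Ipq; elim: n => [|n IHn]; first by rewrite !expr0; apply: poly_congr_refl.
by rewrite !exprS; apply: poly_congrM.
Qed.

Lemma poly_congr_sum n (P Q : 'I_n -> {poly A}) :
  (forall i, poly_congr (P i) (Q i)) -> poly_congr (\sum_i P i) (\sum_i Q i).
Proof.
move=> IPQ; elim/big_rec2: _ => [|i p q _ Ipq]; first exact: poly_congr_refl.
exact: poly_congrD.
Qed.

Lemma poly_congr_XsubC c : I c -> poly_congr ('X - c%:P) 'X.
Proof.
move=> Ic j; rewrite (_ : _ - _ = - c%:P); last by ring.
rewrite coefN coefC; case: eqP => _; first exact: (ideal_opp I_ideal).
by rewrite oppr0; apply: (ideal0 I_ideal).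
Qed.

Lemma psmul_congr (p q : {poly A}) (G : nat -> A) k :
  (forall j, I ((p - q)`_j * G (k - j)%N)) ->
  I (psmul (nth 0 p) G k - psmul (nth 0 q) G k).
Proof.
move=> Ipq; rewrite /psmul -sumrB; apply: (ideal_sum I_ideal) => j _.
by rewrite -mulrBl -coefB.
Qed.

End PolyCongr.

Section Tpow.
Variables (K : fieldType) (A : comAlgType K) (mA J : A -> Prop).
Hypotheses (mA_ideal : is_ideal mA) (J_ideal : is_ideal J).

Lemma tpow_congr c e : mA c -> poly_congr mA (('X - c%:P) ^+ e) 'X^e.
Proof. by move=> Ic; apply: (poly_congrX mA_ideal); apply: poly_congr_XsubC. Qed.

Lemma tpow_subr_congr c c' m : mA c -> mA c' ->
  (forall u, mA u -> J ((c' - c) * u)) ->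
  poly_congr J (('X - c%:P) ^+ m - ('X - c'%:P) ^+ m) (((c' - c) *+ m)%:P * 'X^(m.-1)).
Proof.
move=> Ic Ic' mulJ j.
have S_congr : poly_congr mA (\sum_(i < m) ('X - c%:P) ^+ (m.-1 - i) * ('X - c'%:P) ^+ i)
                             (\sum_(i < m) 'X^(m.-1)).
  apply: (poly_congr_sum mA_ideal) => i.
  have le_i : (i <= m.-1)%N by rewrite -ltnS (ltn_predK (ltn_ord i)).
  rewrite -{2}(subnK le_i) exprD.
  by apply: (poly_congrM mA_ideal); apply: tpow_congr.
have dX : 'X - c%:P - ('X - c'%:P) = (c' - c)%:P.
  by rewrite polyCB opprB addrC addrA subrK.
rewrite sumr_const card_ord in S_congr.
rewrite subrXX dX polyCMn mulrnAl -mulrnAr -mulrBr coefCM.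
exact: mulJ.
Qed.

End Tpow.

Lemma psmul_scaleXn (R : nzRingType) (u : R) e (G : nat -> R) k :
  psmul (nth 0 (u%:P * 'X^e)) G k = if (e <= k)%N then u * G (k - e)%N else 0.
Proof.
rewrite /psmul (eq_bigr (fun j : 'I_k.+1 => if (j : nat) == e then u * G (k - j)%N else 0)).
  by rewrite -big_mkcond (big_ord1_eq _ (fun j => u * G (k - j)%N)) ltnS.
by move=> j _; rewrite coefCM coefXn; case: eqP; rewrite ?mulr1 ?mulr0 ?mul0r.
Qed.

Lemma psmul_Xn (R : nzRingType) e (G : nat -> R) k :
  psmul (nth 0 'X^e) G k = if (e <= k)%N then G (k - e)%N else 0.
Proof. by rewrite -['X^e]mul1r -polyC1 psmul_scaleXn mul1r. Qed.

Lemma psmulBr (R : nzRingType) (P G G' : nat -> R) k :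
  psmul P G k - psmul P G' k = psmul P (fun n => G n - G' n) k.
Proof. by rewrite /psmul -sumrB; apply: eq_bigr => j _; rewrite mulrBr. Qed.

Lemma psmulBl (R : nzRingType) (p q : {poly R}) (G : nat -> R) k :
  psmul (nth 0 p) G k - psmul (nth 0 q) G k = psmul (nth 0 (p - q)) G k.
Proof. by rewrite /psmul -sumrB; apply: eq_bigr => j _; rewrite coefB mulrBl. Qed.

Definition tpow_cofactor (K : fieldType) (A : comAlgType K) (c : A) (e : nat) (F G : nat -> A) :=
  forall n, F n = psmul (nth 0 (('X - c%:P) ^+ e)) G n.

Section Cofactor.
Variables (K : fieldType) (A : comAlgType K) (mA : A -> Prop).
Hypothesis mA_ideal : is_ideal mA.

Lemma cofactor_congr F (f : nat -> K) a c m G :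
  mA a -> mA c -> (forall k, mA (F k - (f k)%:A)) -> tpow_cofactor c m (pssubC F a) G ->
  forall j, mA (G j - (f (j + m)%N)%:A).
Proof.
move=> Ia Ic F_lift G_cof j.
have G_congr : mA (psmul (nth 0 (('X - c%:P) ^+ m)) G (j + m) - psmul (nth 0 'X^m) G (j + m)).
  by apply: (psmul_congr mA_ideal) => i; apply: (ideal_mulr mA_ideal); apply: tpow_congr.
rewrite psmul_Xn leq_addl addnK -G_cof /pssubC in G_congr.
set a0 := (if _ then _ else _) in G_congr.
have Ia0 : mA a0 by rewrite /a0; case: ifP => _ //; apply: ideal0.
have Iu := ideal_sub mA_ideal (ideal_sub mA_ideal (F_lift (j + m)%N) Ia0) G_congr.
by apply: (eq_ind _ mA Iu); ring.
Qed.

(* Quantifying over all cofactors avoids choosing them. *)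
Definition cofactors_congr (I : A -> Prop) (F : nat -> A) (a a' c c' : A) (m : nat) :=
  forall G G', tpow_cofactor c m (pssubC F a) G -> tpow_cofactor c' m (pssubC F a') G' ->
  forall k, I (G k - G' k).

Lemma cofactors_congr_mA F (f : nat -> K) a a' c c' m :
  mA a -> mA a' -> mA c -> mA c' -> (forall k, mA (F k - (f k)%:A)) ->
  cofactors_congr mA F a a' c c' m.
Proof.
move=> Ia Ia' Ic Ic' F_lift G G' G_cof G'_cof k.
rewrite (_ : _ - _ = (G k - (f (k + m)%N)%:A) - (G' k - (f (k + m)%N)%:A)); last by ring.
by apply: (ideal_sub mA_ideal); apply: cofactor_congr => //; eassumption.
Qed.

End Cofactor.

(* [I] and [J] play the roles of m_A^n and m_A^(n+1). *)
Section Branch.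
Variables (K : fieldType) (A : comAlgType K) (mA I J : A -> Prop).
Hypotheses (mA_ideal : is_ideal mA) (J_ideal : is_ideal J).
Hypothesis mulIJ : forall u v, mA u -> I v -> J (u * v).
Variables (F : nat -> A) (f : nat -> K) (m : nat) (a a' c c' : A).
Hypotheses (m_gt0 : (0 < m)%N) (F_lift : forall k, mA (F k - (f k)%:A)).
Hypotheses (a'_mA : mA a') (c_mA : mA c) (c'_mA : mA c').
Hypotheses (F_tpow : in_tpow c m (pssubC F a)) (F_tpow' : in_tpow c' m (pssubC F a')).
Hypotheses (dc_I : I (c' - c)) (dG_I : cofactors_congr I F a a' c c' m).

(* Coefficient k of (t - c)^m G - (t - c')^m G' = a' - a, modulo J. *)
Lemma branch_congr G G' :
  tpow_cofactor c m (pssubC F a) G -> tpow_cofactor c' m (pssubC F a') G' -> forall k,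
  J ((if k == 0%N then a' - a else 0)
     - (if (m <= k)%N then G (k - m)%N - G' (k - m)%N else 0)
     - (if (m.-1 <= k)%N then (c' - c) *+ m * (f k.+1)%:A else 0)).
Proof.
move=> G_cof G'_cof k.
set P := ('X - c%:P) ^+ m; set P' := ('X - c'%:P) ^+ m.
have origin_diff : (if k == 0%N then a' - a else 0) =
    psmul (nth 0 P) (fun n => G n - G' n) k + psmul (nth 0 (P - P')) G' k.
  by rewrite -psmulBr -psmulBl -G_cof -G'_cof /pssubC; case: ifP => _; ring.
have JG : J (psmul (nth 0 P) (fun n => G n - G' n) k
             - (if (m <= k)%N then G (k - m)%N - G' (k - m)%N else 0)).
  rewrite -(psmul_Xn _ (fun n => G n - G' n)); apply: (psmul_congr J_ideal) => j.
  by apply: mulIJ; [apply: tpow_congr | apply: dG_I].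
have Jc : J (psmul (nth 0 (P - P')) G' k
             - (if (m.-1 <= k)%N then (c' - c) *+ m * G' (k - m.-1)%N else 0)).
  rewrite -psmul_scaleXn; apply: (psmul_congr J_ideal) => j.
  apply: (ideal_mulr J_ideal); apply: (tpow_subr_congr mA_ideal) => // u Iu.
  by rewrite mulrC; apply: mulIJ.
have JG' : J (if (m.-1 <= k)%N then (c' - c) *+ m * (G' (k - m.-1)%N - (f k.+1)%:A) else 0).
  case: ifPn => [le_mk|_]; last exact: ideal0.
  have := cofactor_congr mA_ideal a'_mA c'_mA F_lift G'_cof (k - m.-1).
  rewrite (_ : k - m.-1 + m = k.+1)%N => [IG'|]; last by rewrite -{2}(prednK m_gt0) addnS subnK.
  by rewrite mulrnAl; apply: (ideal_muln J_ideal); rewrite mulrC; apply: mulIJ.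
rewrite origin_diff.
by apply: (eq_ind _ J (ideal_add J_ideal (ideal_add J_ideal JG Jc) JG')); case: (m.-1 <= k)%N; ring.
Qed.

Lemma branch_tangent : J ((if m == 1%N then a' - a else 0) - (c' - c) *+ m * (f m)%:A).
Proof.
case: F_tpow F_tpow' => G G_cof [G' G'_cof].
have := branch_congr G_cof G'_cof m.-1.
rewrite leqnn prednK // leqNgt ltn_predL m_gt0 subr0.
by rewrite (_ : (m.-1 == 0%N) = (m == 1%N)) //; case: (m) m_gt0 => [|[]].
Qed.

Lemma branch_origin : (1 < m)%N -> J (a' - a).
Proof.
move=> m_gt1; case: F_tpow F_tpow' => G G_cof [G' G'_cof].
have := branch_congr G_cof G'_cof 0.
by rewrite eqxx leqn0 gtn_eqF // leqn0 -subn1 subn_eq0 leqNgt m_gt1 !subr0.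
Qed.

Lemma branch_cofactors : J (c' - c) -> cofactors_congr J F a a' c c' m.
Proof.
move=> dc_J G G' G_cof G'_cof j; have := branch_congr G_cof G'_cof (j + m).
rewrite addn_eq0 (gtn_eqF m_gt0) andbF leq_addl addnK.
rewrite (leq_trans (leq_pred m)) ?leq_addl // sub0r => J_sum.
have dcf_J : J ((c' - c) *+ m * (f (j + m).+1)%:A).
  by rewrite mulrnAl; apply: (ideal_muln J_ideal); apply: (ideal_mulr J_ideal).
by apply: (eq_ind _ J (ideal_opp J_ideal (ideal_add J_ideal J_sum dcf_J))); ring.
Qed.

Lemma branch_step :
  [/\ J ((if m == 1%N then a' - a else 0) - (c' - c) *+ m * (f m)%:A),
      (1 < m)%N -> J (a' - a) &
      J (c' - c) -> cofactors_congr J F a a' c c' m].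
Proof. by split; [apply: branch_tangent | apply: branch_origin | apply: branch_cofactors]. Qed.

End Branch.

Section Uniqueness.
Variables (K : fieldType) (r : nat) (x y : 'I_r -> nat -> K) (mlt : 'I_r -> nat).
Hypotheses (mlt_gt0 : forall i, (0 < mlt i)%N) (mlt_neq0 : forall i, (mlt i)%:R != 0 :> K).
Hypothesis tangent_neq0 : forall i, x i (mlt i) != 0 \/ y i (mlt i) != 0.
Hypothesis smooth_transversal : (forall i, mlt i = 1%N) ->
  exists i j, x i 1%N * y j 1%N - y i 1%N * x j 1%N != 0.
Variables (A : comAlgType K) (mA : A -> Prop).
Hypothesis mA_ideal : is_ideal mA.
Variables (X Y : 'I_r -> nat -> A) (a b a' b' : A) (c c' : 'I_r -> A).
Hypotheses (X_lift : forall i k, mA (X i k - (x i k)%:A))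
           (Y_lift : forall i k, mA (Y i k - (y i k)%:A)).
Hypotheses (a_mA : mA a) (b_mA : mA b) (c_mA : forall i, mA (c i))
           (a'_mA : mA a') (b'_mA : mA b') (c'_mA : forall i, mA (c' i)).
Hypotheses (X_tpow : forall i, in_tpow (c i) (mlt i) (pssubC (X i) a))
           (Y_tpow : forall i, in_tpow (c i) (mlt i) (pssubC (Y i) b))
           (X_tpow' : forall i, in_tpow (c' i) (mlt i) (pssubC (X i) a'))
           (Y_tpow' : forall i, in_tpow (c' i) (mlt i) (pssubC (Y i) b')).

Definition sections_congr (I : A -> Prop) :=
  [/\ I (a' - a), I (b' - b) &
      forall i, [/\ I (c' i - c i), cofactors_congr I (X i) a a' (c i) (c' i) (mlt i)
                  & cofactors_congr I (Y i) b b' (c i) (c' i) (mlt i)]].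

Lemma sections_congr_mA (I : A -> Prop) : (forall u, mA u -> I u) -> sections_congr I.
Proof.
move=> mA_I; split; try by apply: mA_I; apply: (ideal_sub mA_ideal).
move=> i; split; first by apply: mA_I; apply: (ideal_sub mA_ideal).
- move=> G G' G_cof G'_cof k; apply: mA_I; move: G G' G_cof G'_cof k.
  exact: (cofactors_congr_mA mA_ideal a_mA a'_mA (c_mA i) (c'_mA i) (X_lift i)).
- move=> G G' G_cof G'_cof k; apply: mA_I; move: G G' G_cof G'_cof k.
  exact: (cofactors_congr_mA mA_ideal b_mA b'_mA (c_mA i) (c'_mA i) (Y_lift i)).
Qed.

Section Step.
Variables I J : A -> Prop.
Hypotheses (J_ideal : is_ideal J) (mulIJ : forall u v, mA u -> I v -> J (u * v)).
Hypothesis congr_I : sections_congr I.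

Lemma branch_stepX i :
  [/\ J ((if mlt i == 1%N then a' - a else 0) - (c' i - c i) *+ mlt i * (x i (mlt i))%:A),
      (1 < mlt i)%N -> J (a' - a) &
      J (c' i - c i) -> cofactors_congr J (X i) a a' (c i) (c' i) (mlt i)].
Proof.
have [_ _ /(_ i) [dc_I dG_I _]] := congr_I.
exact: (branch_step mA_ideal J_ideal mulIJ (mlt_gt0 i) (X_lift i) a'_mA (c_mA i) (c'_mA i)
                    (X_tpow i) (X_tpow' i) dc_I dG_I).
Qed.

Lemma branch_stepY i :
  [/\ J ((if mlt i == 1%N then b' - b else 0) - (c' i - c i) *+ mlt i * (y i (mlt i))%:A),
      (1 < mlt i)%N -> J (b' - b) &
      J (c' i - c i) -> cofactors_congr J (Y i) b b' (c i) (c' i) (mlt i)].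
Proof.
have [_ _ /(_ i) [dc_I _ dG_I]] := congr_I.
exact: (branch_step mA_ideal J_ideal mulIJ (mlt_gt0 i) (Y_lift i) b'_mA (c_mA i) (c'_mA i)
                    (Y_tpow i) (Y_tpow' i) dc_I dG_I).
Qed.

Lemma sigma_congr : J (a' - a) /\ J (b' - b).
Proof.
case: (pickP (fun i => 1 < mlt i)%N) => [i /= mlt_gt1 | smooth].
  by have [_ Ja _] := branch_stepX i; have [_ Jb _] := branch_stepY i; split; auto.
have mlt1 i : mlt i = 1%N.
  by apply/eqP; rewrite eqn_leq mlt_gt0 andbT leqNgt; apply/negbT/smooth.
have [i [j det_neq0]] := smooth_transversal mlt1.
have [+ _ _] := branch_stepX i; have [+ _ _] := branch_stepY i.
have [+ _ _] := branch_stepX j; have [+ _ _] := branch_stepY j.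
rewrite !mlt1 !eqxx !mulr1n ![(_ - _) * _%:A]mulrC.
by move=> Jbj Jaj Jbi Jai; apply: (ideal_collinear J_ideal det_neq0 Jai Jbi Jaj Jbj).
Qed.

Lemma sigmabar_congr i : J (c' i - c i).
Proof.
have [Ja Jb] := sigma_congr.
have [Jx _ _] := branch_stepX i; have [Jy _ _] := branch_stepY i.
have tangent_J (u v : A) : J u -> J ((if mlt i == 1%N then u else 0) - v) -> J v.
  move=> Ju Juv; have Ju1 : J (if mlt i == 1%N then u else 0).
    by case: ifP => _ //; apply: ideal0.
  by apply: (eq_ind _ J (ideal_sub J_ideal Ju1 Juv)); ring.
case: (tangent_neq0 i) => [x_neq0 | y_neq0].
  apply: (ideal_muln_scale_cancel J_ideal (k := x i (mlt i))); last exact: tangent_J Ja Jx.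
  by rewrite mulf_neq0.
apply: (ideal_muln_scale_cancel J_ideal (k := y i (mlt i))); last exact: tangent_J Jb Jy.
by rewrite mulf_neq0.
Qed.

Lemma sections_congr_step : sections_congr J.
Proof.
have [Ja Jb] := sigma_congr; split=> // i; have dc_J := sigmabar_congr i.
have [_ _ GX] := branch_stepX i; have [_ _ GY] := branch_stepY i.
by split; [| apply: GX | apply: GY].
Qed.

End Step.

Lemma sections_congr_pow n : sections_congr (ideal_pow mA n.+1).
Proof.
elim: n => [|n IHn]; first exact/sections_congr_mA/ideal_pow1.
exact: (sections_congr_step (ideal_pow_ideal mA_ideal _) (@ideal_pow_mul _ _ mA n.+1) IHn).
Qed.

Lemma sections_eq : (forall u, (forall n, ideal_pow mA n u) -> u = 0) ->
  [/\ a = a', b = b' & forall i, c i = c' i].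
Proof.
move=> separated.
have eq_pow u v : (forall n, ideal_pow mA n.+1 (v - u)) -> u = v.
  by move=> uv; apply/esym/subr0_eq/separated; case.
split; [| | move=> i]; apply: eq_pow => n; first by case: (sections_congr_pow n).
  by case: (sections_congr_pow n).
by have [_ _ /(_ i) []] := sections_congr_pow n.
Qed.

End Uniqueness.

Lemma is_mult_gt0 (K : fieldType) (x y : nat -> K) m :
  x 0%N = 0 -> y 0%N = 0 -> is_mult x y m -> (0 < m)%N.
Proof. by move=> x0 y0 [_]; case: m => // ; rewrite x0 y0 eqxx; case. Qed.

Lemma natf_neq0_pchar_ndvd (K : fieldType) n :
  (0 < n)%N -> (forall p, p \in [pchar K] -> ~~ (p %| n)%N) -> n%:R != 0 :> K.
Proof.
move=> n_gt0 pchar_ndvd; apply/negP => n0.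
have [p pcharKp] := natf0_pchar n_gt0 n0.
by move: (pchar_ndvd p pcharKp); rewrite (dvdn_pcharf pcharKp) n0.
Qed.

Lemma smooth_branches_transversal (K : fieldType) r (x y : 'I_r -> nat -> K) mlt :
  (1 < \sum_(i < r) mlt i)%N -> (forall i, 1 < mlt i)%N \/ distinct_tangents x y mlt ->
  (forall i, mlt i = 1%N) -> exists i j, x i 1%N * y j 1%N - y i 1%N * x j 1%N != 0.
Proof.
move=> sum_gt1 sing_or_distinct mlt1.
have r_gt1 : (1 < r)%N.
  by move: sum_gt1; rewrite (eq_bigr (fun=> 1%N)) ?sum_nat_const ?card_ord ?muln1.
pose i0 : 'I_r := Ordinal (ltnW r_gt1); pose i1 : 'I_r := Ordinal r_gt1.
case: sing_or_distinct => [/(_ i0)|/(_ i0 i1 isT)]; first by rewrite mlt1.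
by rewrite !mlt1; exists i0, i1.
Qed.

Unset Implicit Arguments.

Theorem lemma2p9 (K : closedFieldType) (r : nat)
  (f : bps K) (fi : 'I_r -> bps K) (x y : 'I_r -> nat -> K) (mlt : 'I_r -> nat)
  (Hcurve : param_of_curve f fi x y)
  (Hmult : forall i, is_mult (x i) (y i) (mlt i))
  (Hsing : (1 < \sum_(i < r) mlt i)%N)
  (Hgood : good_char K mlt)
  (Hbranch : (forall i, (1 < mlt i)%N) \/ distinct_tangents x y mlt)
  (A : comAlgType K) (mA : A -> Prop) (HA : complete_local_K_alg mA)
  (X Y : 'I_r -> nat -> A) (Hlift : lifts mA x y X Y)
  (a b : A) (c : 'I_r -> A) (a' b' : A) (c' : 'I_r -> A)
  (Hs : equimult_sections mA mlt X Y a b c)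
  (Hs' : equimult_sections mA mlt X Y a' b' c') :
  a = a' /\ b = b' /\ (forall i, c i = c' i).
Proof.
case: HA => [[mA_ideal _ _ _ _] [separated _]].
have mlt_gt0 i : (0 < mlt i)%N.
  by case: Hcurve => _ _ _ _ /(_ i) [x0 y0 _ _]; apply: is_mult_gt0 (Hmult i).
have mlt_neq0 i : (mlt i)%:R != 0 :> K by apply: natf_neq0_pchar_ndvd (mlt_gt0 i) (Hgood i).
case: Hs Hs' => a_mA b_mA c_mA XY_tpow [a'_mA b'_mA c'_mA XY_tpow'].
have [-> -> c_eq] := sections_eq mlt_gt0 mlt_neq0 (fun i => (Hmult i).2)
  (smooth_branches_transversal Hsing Hbranch) mA_ideal
  (fun i k => (Hlift i k).1) (fun i k => (Hlift i k).2) a_mA b_mA c_mA a'_mA b'_mA c'_mA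
  (fun i => (XY_tpow i).1) (fun i => (XY_tpow i).2)
  (fun i => (XY_tpow' i).1) (fun i => (XY_tpow' i).2) separated.
by split; [|split].
Qed.
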